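(* Consider the $r$-cGA with parameter $K$ on $r\text{-OneMax}$ with frequencies $p^{(t)}_{i,j}$. For $t\geq 0$ let $\varphi_t:=\sum_{i=1}^n(1-p^{(t)}_{i,r-1})=n-\sum_{i=1}^n p^{(t)}_{i,r-1}$. If there is some $s>0$ such that $p^{(t)}_{i,r-1}\geq s$ for all $i\in\{1,\dots,n\}$, and furthermore $\varphi_t\geq 1/2$, then \[\mathbb{E}(\varphi_t-\varphi_{t+1}\mid\varphi_t)\geq\frac{2s\sqrt{\varphi_t}}{15K}.\]
   Context: Let $n\geq 1$, $r\geq 2$ be integers and $K>0$. The $r$-cGA maximizing $f$ maintains frequencies $p^{(t)}_{i,j}$ ($i\in\{1,\dots,n\}$, $j\in\{0,\dots,r-1\}$), initialized to $1/r$. In iteration $t$ it samples $x,y\in\{0,\dots,r-1\}^n$ independently, each position $i$ independently with $\Pr[x_i=j]=p^{(t)}_{i,j}$; if $f(x)<f(y)$ it swaps $x$ and $y$; then it sets $p^{(t+1)}_{i,j}=p^{(t)}_{i,j}+\frac1K(\mathbf{1}[x_i=j]-\mathbf{1}[y_i=j])$ for all $i,j$, with no margins. It is assumed that $1/r$ is an integer multiple of $1/K$. Here $f=r\text{-OneMax}$, $r\text{-OneMax}(x)=\sum_{i=1}^n\mathbf{1}[x_i=r-1]$. *)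

From HB Require Import structures.
From mathcomp Require Import all_boot all_order all_algebra.
From mathcomp Require Import reals.
Set Implicit Arguments. Unset Strict Implicit. Unset Printing Implicit Defensive.
Import Order.TTheory GRing.Theory Num.Theory.
Local Open Scope ring_scope.

(* The alphabet {0,...,r-1}.  We write it as 'I_(r.-1).+1, which equals 'I_r
   whenever r >= 1 (the theorem assumes r >= 2), so that the top value r-1
   is available as ord_max. *)
Definition Sym (r : nat) := 'I_(r.-1).+1.
Definition topS (r : nat) : Sym r := ord_max.

Definition ind (n r : nat) := {ffun 'I_n -> Sym r}.

Definition freq (R : realType) (n r : nat) := 'M[R]_(n, (r.-1).+1).

Definition rOneMax (n r : nat) (x : ind n r) : nat :=
  \sum_(i < n) (x i == topS r : nat).

Definition probx (R : realType) (n r : nat) (p : freq R n r) (x : ind n r) : R :=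
  \prod_(i < n) p i (x i).

(* Frequency update with winner x and loser y (no margins). *)
Definition cga_update (R : realType) (n r : nat) (K : R) (p : freq R n r)
    (x y : ind n r) : freq R n r :=
  \matrix_(i, j) (p i j + K^-1 * ((x i == j)%:R - (y i == j)%:R)).

Definition cga_step (R : realType) (n r : nat) (K : R) (p : freq R n r)
    (x y : ind n r) : freq R n r :=
  if (rOneMax x < rOneMax y)%N then cga_update K p y x else cga_update K p x y.

Definition init_freq (R : realType) (n r : nat) : freq R n r :=
  const_mx (r%:R^-1).

(* States that p^{(t)} takes with positive probability at time t. *)
Inductive reachable (R : realType) (n r : nat) (K : R) : nat -> freq R n r -> Prop :=
| reach0 : reachable K 0 (init_freq R n r)
| reachS t p (x y : ind n r) :
    reachable K t p -> 0 < probx p x * probx p y ->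
    reachable K t.+1 (cga_step K p x y).

Definition phi (R : realType) (n r : nat) (p : freq R n r) : R :=
  \sum_(i < n) (1 - p i (topS r)).

Definition exp_next (R : realType) (n r : nat) (K : R) (F : freq R n r -> R)
    (p : freq R n r) : R :=
  \sum_(x : ind n r) \sum_(y : ind n r) probx p x * probx p y * F (cga_step K p x y).

(* The step decreases phi by |Z|/K, where Z = OneMax(x) - OneMax(y) is a sum of
   independent coordinate terms in {-1, 0, 1} with mean 0, third moment 0 and
   variance V = \sum_i 2 q_i (1 - q_i), q_i = p_{i,r-1}; hence 2 s phi <= V <= 2 phi,
   E Z^2 = V and E Z^4 <= V + 3 V^2.  Integrating the pointwise bound
   54 sg^3 |z| >= 27 sg^2 z^2 - z^4 with sg = sqrt phi gives E|Z| >= 2 s sg / 15.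
   Nonnegativity of the frequencies holds because reachable frequencies are
   multiples of 1/K: a frequency that is decreased was sampled, so it is positive. *)

From HB Require Import structures.
From mathcomp Require Import all_boot all_order all_algebra.
From mathcomp Require Import reals.
From mathcomp Require Import ring lra.
Set Implicit Arguments.
Unset Strict Implicit.
Unset Printing Implicit Defensive.
Import Order.TTheory GRing.Theory Num.Theory.
Local Open Scope ring_scope.

(* [t (t + 6 sg) (t - 3 sg)^2 = t^4 - 27 sg^2 t^2 + 54 sg^3 t] is nonnegative for [t = |z|]. *)
Lemma abs_ge_quartic (R : realType) (sg z : R) : 0 <= sg ->
  27 * sg ^+ 2 * z ^+ 2 - z ^+ 4 <= 54 * sg ^+ 3 * `|z|.
Proof.
move=> sg_ge0; rewrite [z ^+ 4](exprM z 2 2) -[z ^+ 2](real_normK (num_real z)).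
have : 0 <= `|z| * (`|z| + 6 * sg) * (`|z| - 3 * sg) ^+ 2.
  by rewrite mulr_ge0 ?sqr_ge0 // mulr_ge0 // addr_ge0 // mulr_ge0.
set t := `|z|; nra.
Qed.

(* [27 sg^2 V - V - 3 V^2 >= 19 sg^2 V >= 38 s sg^4], and [38/54 > 2/15]. *)
Lemma abs_moment_lower_bound (R : realType) (s sg V A : R) :
  0 < s -> 0 < sg -> 1 / 2 <= sg ^+ 2 -> 2 * s * sg ^+ 2 <= V <= 2 * sg ^+ 2 ->
  27 * sg ^+ 2 * V - (V + 3 * V ^+ 2) <= 54 * sg ^+ 3 * A ->
  2 * s * sg / 15 <= A.
Proof.
move=> s_gt0 sg_gt0 sg2_ge /andP[V_ge V_le] A_ge.
have V_ge0 : 0 <= V by apply: le_trans V_ge; rewrite !mulr_ge0 ?sqr_ge0 // ltW.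
have A_lb : 38 * s * sg <= 54 * A.
  rewrite -(ler_pM2l (exprn_gt0 3 sg_gt0)).
  have : 0 <= V * (8 * sg ^+ 2 - 1 - 3 * V) by apply: mulr_ge0; lra.
  have : 0 <= sg ^+ 2 * (V - 2 * s * sg ^+ 2) by apply: mulr_ge0; [apply: sqr_ge0 | lra].
  nra.
have : 0 <= s * sg by rewrite mulr_ge0 // ltW.
lra.
Qed.

Definition row_stochastic (R : realType) n r (q : freq R n r) :=
  forall i, \sum_j q i j = 1.

Section PairExpectation.
Variables (R : realType) (n r : nat) (p : freq R n r).
Hypothesis p_stochastic : row_stochastic p.

Definition ffun_upd (x : ind n r) (k : 'I_n) (a : Sym r) : ind n r :=
  [ffun i => if i == k then a else x i].

Lemma ffun_upd_eq x k a : ffun_upd x k a k = a.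
Proof. by rewrite ffunE eqxx. Qed.

Lemma ffun_upd_neq x k a i : i != k -> ffun_upd x k a i = x i.
Proof. by move=> ik; rewrite ffunE (negbTE ik). Qed.

Lemma ffun_updK x k a : ffun_upd (ffun_upd x k a) k (x k) = x.
Proof. by apply/ffunP => i; rewrite !ffunE; case: eqP => // ->. Qed.

Lemma sum_ffun_upd k (F : ind n r -> Sym r -> R) :
  \sum_(x : ind n r) \sum_a F (ffun_upd x k a) (x k) =
  \sum_(x : ind n r) \sum_a F x a.
Proof.
rewrite !pair_bigA /=.
pose f (u : ind n r * Sym r) := (ffun_upd u.1 k u.2, u.1 k).
have f_inj : injective f.
  by apply: (can_inj (g := f)) => -[x a]; rewrite /f /= ffun_updK ffun_upd_eq.
by rewrite [RHS](reindex_inj f_inj).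
Qed.

Definition probx_off (k : 'I_n) (x : ind n r) := \prod_(i | i != k) p i (x i).

Lemma probxD1 k x : probx p x = p k (x k) * probx_off k x.
Proof. by rewrite /probx (bigD1 k). Qed.

Lemma probx_off_upd k x a : probx_off k (ffun_upd x k a) = probx_off k x.
Proof. by apply: eq_bigr => i ik; rewrite ffun_upd_neq. Qed.

Lemma sum_probx : \sum_(x : ind n r) probx p x = 1.
Proof.
rewrite /probx -(bigA_distr_bigA (fun i j => p i j)).
by rewrite big1 // => i _; rewrite p_stochastic.
Qed.

Lemma sum_probx_indep k (F : ind n r -> R) (c : Sym r -> R) :
  (forall x a, F (ffun_upd x k a) = F x) ->
  \sum_(x : ind n r) probx p x * F x * c (x k) =
  (\sum_(x : ind n r) probx p x * F x) * \sum_a p k a * c a.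
Proof.
move=> F_off; rewrite mulr_suml.
transitivity (\sum_(x : ind n r) \sum_a p k a * (probx p x * F x * c (x k))).
  by apply: eq_bigr => x _; rewrite -mulr_suml p_stochastic mul1r.
rewrite -(sum_ffun_upd k); apply: eq_bigr => x _; rewrite mulr_sumr.
apply: eq_bigr => a _.
by rewrite ffun_upd_eq F_off !(probxD1 k) probx_off_upd ffun_upd_eq; ring.
Qed.

Definition Epair (G : ind n r -> ind n r -> R) :=
  \sum_(x : ind n r) \sum_(y : ind n r) probx p x * probx p y * G x y.

Definition Ecoord (k : 'I_n) (h : Sym r -> Sym r -> R) :=
  \sum_a \sum_b p k a * p k b * h a b.

Lemma Epair_ext F G : (forall x y, F x y = G x y) -> Epair F = Epair G.
Proof. by move=> FG; apply: eq_bigr => x _; apply: eq_bigr => y _; rewrite FG. Qed.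

Lemma Epair_cst c : Epair (fun _ _ => c) = c.
Proof.
rewrite /Epair -[RHS]mul1r -sum_probx mulr_suml; apply: eq_bigr => x _.
by rewrite -mulr_suml -mulr_sumr sum_probx mulr1.
Qed.

Lemma EpairB F G :
  Epair (fun x y => F x y - G x y) = Epair F - Epair G.
Proof.
rewrite /Epair -sumrB; apply: eq_bigr => x _.
by rewrite -sumrB; apply: eq_bigr => y _; ring.
Qed.

Lemma EpairZ a F : Epair (fun x y => a * F x y) = a * Epair F.
Proof.
rewrite /Epair mulr_sumr; apply: eq_bigr => x _.
by rewrite mulr_sumr; apply: eq_bigr => y _; ring.
Qed.

Lemma Epair_sum m (F : 'I_m -> ind n r -> ind n r -> R) :
  Epair (fun x y => \sum_(j < m) F j x y) = \sum_(j < m) Epair (F j).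
Proof.
rewrite /Epair.
under eq_bigr => x _ do under eq_bigr => y _ do rewrite mulr_sumr.
under eq_bigr => x _ do rewrite exchange_big /=.
by rewrite exchange_big.
Qed.

Lemma Epair_mulrn F c : Epair (fun x y => F x y *+ c) = Epair F *+ c.
Proof. by rewrite -mulr_natl -EpairZ; apply: Epair_ext => x y; rewrite mulr_natl. Qed.

Lemma Epair_indep k G h :
  (forall x y a, G (ffun_upd x k a) y = G x y) ->
  (forall x y a, G x (ffun_upd y k a) = G x y) ->
  Epair (fun x y => G x y * h (x k) (y k)) = Epair G * Ecoord k h.
Proof.
move=> G_offx G_offy.
transitivity (\sum_(x : ind n r) probx p x *
    (\sum_(y : ind n r) probx p y * G x y) * \sum_b p k b * h (x k) b).
  apply: eq_bigr => x _; rewrite -mulrA -sum_probx_indep // mulr_sumr.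
  by apply: eq_bigr => y _; ring.
rewrite (@sum_probx_indep k _ (fun a => \sum_b p k b * h a b)); last first.
  by move=> x a; apply: eq_bigr => y _; rewrite G_offx.
congr (_ * _); first by apply: eq_bigr => x _; rewrite mulr_sumr; apply: eq_bigr => y _; ring.
by apply: eq_bigr => a _; rewrite mulr_sumr; apply: eq_bigr => b _; ring.
Qed.

Lemma Ecoord_top k (H : bool -> bool -> R) :
  let q := p k (topS r) in
  Ecoord k (fun a b => H (a == topS r) (b == topS r)) =
  q * (q * H true true + (1 - q) * H true false) +
  (1 - q) * (q * H false true + (1 - q) * H false false).
Proof.
have sum_top (G : bool -> R) :
    \sum_a p k a * G (a == topS r) =
    p k (topS r) * G true + (1 - p k (topS r)) * G false.
  rewrite (bigD1 (topS r)) //= eqxx; congr (_ + _).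
  have -> : 1 - p k (topS r) = \sum_(a | a != topS r) p k a.
    by rewrite -(p_stochastic k) (bigD1 (topS r)) //= addrC addrK.
  by rewrite mulr_suml; apply: eq_bigr => a /negbTE ->.
move=> q; rewrite /Ecoord -(sum_top (fun c => q * H c true + (1 - q) * H c false)).
apply: eq_bigr => a _.
by rewrite -sum_top mulr_sumr; apply: eq_bigr => b _; rewrite mulrA.
Qed.

Definition top_diff (a b : Sym r) : R := (a == topS r)%:R - (b == topS r)%:R.

Lemma Ecoord_top_diff k j :
  let q := p k (topS r) in
  Ecoord k (fun a b => top_diff a b ^+ j) =
  (q ^+ 2 + (1 - q) ^+ 2) * 0 ^+ j + q * (1 - q) * (1 + (-1) ^+ j).
Proof.
move=> q; rewrite (Ecoord_top k (fun c d => (c%:R - d%:R) ^+ j)) /=.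
by rewrite !subrr subr0 sub0r expr1n -/q; ring.
Qed.

Definition gap k (x y : ind n r) := \sum_(i < n | (i < k)%N) top_diff (x i) (y i).

Definition var_top i := 2 * p i (topS r) * (1 - p i (topS r)).

Definition var_gap k := \sum_(i < n | (i < k)%N) var_top i.

Lemma sum_prefixS k (hk : (k < n)%N) (F : 'I_n -> R) :
  \sum_(i < n | (i < k.+1)%N) F i = \sum_(i < n | (i < k)%N) F i + F (Ordinal hk).
Proof.
rewrite (bigD1 (Ordinal hk)) //= addrC; congr (_ + _); apply: eq_bigl => i.
by rewrite ltnS -(inj_eq val_inj) /= andbC -ltn_neqAle.
Qed.

Lemma gap_upd k (hk : (k < n)%N) x y a :
  gap k (ffun_upd x (Ordinal hk) a) y = gap k x y /\
  gap k x (ffun_upd y (Ordinal hk) a) = gap k x y.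
Proof.
have ffun_upd_prefix z (i : 'I_n) : (i < k)%N -> ffun_upd z (Ordinal hk) a i = z i.
  by move=> ik; rewrite ffun_upd_neq // -(inj_eq val_inj) /= ltn_eqF.
by split; apply: eq_bigr => i ik; rewrite ffun_upd_prefix.
Qed.

Lemma Epair_gapS_pow k (hk : (k < n)%N) m :
  Epair (fun x y => gap k.+1 x y ^+ m) =
  \sum_(j < m.+1) (Epair (fun x y => gap k x y ^+ (m - j)) *
                   Ecoord (Ordinal hk) (fun a b => top_diff a b ^+ j)) *+ 'C(m, j).
Proof.
under Epair_ext => x y do rewrite /gap sum_prefixS exprDn.
rewrite Epair_sum; apply: eq_bigr => j _.
rewrite Epair_mulrn -Epair_indep //.
- by move=> x y a; rewrite (gap_upd hk x y a).1.
- by move=> x y a; rewrite (gap_upd hk x y a).2.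
Qed.

Lemma gap_moments k : (k <= n)%N ->
  Epair (fun x y => gap k x y ^+ 2) = var_gap k /\
  Epair (fun x y => gap k x y ^+ 4) <= var_gap k + 3 * var_gap k ^+ 2.
Proof.
elim: k => [|k IH] hk.
  have gap0_pow m : Epair (fun x y => gap 0 x y ^+ m.+1) = 0.
    by rewrite -(Epair_cst 0); apply: Epair_ext => x y; rewrite /gap big_pred0 ?expr0n.
  by rewrite /var_gap big_pred0 // !gap0_pow expr0n mulr0 addr0.
have [IH2 IH4] := IH (ltnW hk).
have E0 : Epair (fun x y => gap k x y ^+ 0) = 1 := Epair_cst 1.
rewrite /var_gap sum_prefixS -/(var_gap k) !Epair_gapS_pow !big_ord_recr !big_ord0 /=.
rewrite !Ecoord_top_diff IH2 E0 !bin0 !binn !bin1 !subn0 /var_top.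
set q := p _ (topS r); split; first by ring.
rewrite (_ : 'C(4, 2) = 6) // (_ : 'C(4, 3) = 4) //.
have := sqr_ge0 (q * (1 - q)); nra.
Qed.

Lemma var_gap_bounds s : (forall i, s <= p i (topS r) <= 1) ->
  2 * s * phi p <= var_gap n <= 2 * phi p.
Proof.
move=> p_top; have -> : var_gap n = \sum_i var_top i.
  by apply: eq_bigl => i; rewrite ltn_ord.
rewrite /phi mulr_sumr mulr_sumr; apply/andP; split; apply: ler_sum => i _;
  rewrite /var_top; have /andP[] := p_top i; nra.
Qed.

Hypothesis p_ge0 : forall i j, 0 <= p i j.

Lemma ler_Epair F G : (forall x y, F x y <= G x y) -> Epair F <= Epair G.
Proof.
move=> FG; apply: ler_sum => x _; apply: ler_sum => y _.
by apply: ler_wpM2l => //; apply: mulr_ge0; apply: prodr_ge0.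
Qed.

Lemma Epair_abs_gap_ge sg : 0 <= sg ->
  27 * sg ^+ 2 * var_gap n - (var_gap n + 3 * var_gap n ^+ 2) <=
  54 * sg ^+ 3 * Epair (fun x y => `|gap n x y|).
Proof.
move=> sg_ge0; have [gap2 gap4] := gap_moments (leqnn n).
apply: le_trans (_ : Epair (fun x y => 27 * sg ^+ 2 * gap n x y ^+ 2 - gap n x y ^+ 4) <= _).
  by rewrite EpairB EpairZ gap2 lerB.
by rewrite -EpairZ; apply: ler_Epair => x y; apply: abs_ge_quartic.
Qed.

End PairExpectation.

Arguments gap {R n r} k x y.

Section Cga.
Variables (R : realType) (n r : nat) (K : R).

Definition on_grid (q : freq R n r) := forall i j, exists m : nat, q i j = m%:R * K^-1.

Lemma row_stochastic_update (q : freq R n r) x y :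
  row_stochastic q -> row_stochastic (cga_update K q x y).
Proof.
have sum_eq1 (c : Sym r) : \sum_j (c == j)%:R = 1 :> R.
  by rewrite (bigD1 c) //= eqxx big1 ?addr0 // => j /negbTE; rewrite eq_sym => ->.
move=> q_stoch i; under eq_bigr do rewrite mxE.
by rewrite big_split /= q_stoch -mulr_sumr sumrB !sum_eq1 subrr mulr0 addr0.
Qed.

Lemma on_grid_update (q : freq R n r) x y :
  on_grid q -> probx q y != 0 -> on_grid (cga_update K q x y).
Proof.
move=> q_grid qy_neq0 i j; have [m qij] := q_grid i j; rewrite mxE.
have [yij | yij] := eqVneq (y i) j; last first.
  by exists (m + (x i == j))%N; rewrite qij natrD subr0; ring.
subst j; have qyi_neq0 : q i (y i) != 0.
  by apply: contra qy_neq0 => /eqP qyi0; rewrite /probx (bigD1 i) //= qyi0 mul0r.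
case: m qij => [|m] qij; first by rewrite qij mul0r eqxx in qyi_neq0.
by exists (m + (x i == y i))%N; rewrite qij natrD -addn1 natrD mulr1n; ring.
Qed.

Lemma reachable_grid_stochastic t (q : freq R n r) :
  (2 <= r)%N -> 0 < K -> (exists m : nat, r%:R^-1 = m%:R * K^-1) ->
  reachable K t q -> on_grid q /\ row_stochastic q.
Proof.
move=> r_ge2 K_gt0 [m rK]; elim=> [|{}t {}q x y _ [q_grid q_stoch] xy_pos].
  split=> [i j|i]; first by exists m; rewrite mxE.
  under eq_bigr do rewrite mxE.
  rewrite sumr_const card_ord prednK ?(leq_trans _ r_ge2) //.
  by rewrite -[_ *+ r]mulr_natr mulVf // pnatr_eq0 -lt0n (leq_trans _ r_ge2).
have [qx_neq0 qy_neq0] : probx q x != 0 /\ probx q y != 0.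
  by split; apply: contraTneq xy_pos => ->; rewrite ?mul0r ?mulr0 ltxx.
by rewrite /cga_step; case: ifP => _; split;
  [apply: on_grid_update | apply: row_stochastic_update | apply: on_grid_update
  | apply: row_stochastic_update].
Qed.

Lemma gap_full (x y : ind n r) : gap n x y = (rOneMax x)%:R - (rOneMax y)%:R :> R.
Proof.
by rewrite /gap /rOneMax !natr_sum -sumrB; apply: eq_bigl => i; rewrite ltn_ord.
Qed.

Lemma phi_update (q : freq R n r) x y :
  phi (cga_update K q x y) = phi q - K^-1 * gap n x y.
Proof.
rewrite gap_full /phi /rOneMax !natr_sum -sumrB mulr_sumr -sumrB.
by apply: eq_bigr => i _; rewrite mxE; ring.
Qed.

Lemma phi_step (q : freq R n r) x y :
  phi q - phi (cga_step K q x y) = K^-1 * `|gap n x y|.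
Proof.
rewrite /cga_step; case: ltnP => xy; rewrite phi_update.
- by rewrite !gap_full ltr0_norm ?subr_lt0 ?ltr_nat //; ring.
- by rewrite !gap_full ger0_norm ?subr_ge0 ?ler_nat //; ring.
Qed.

Lemma phi_sub_exp_next (q : freq R n r) : row_stochastic q ->
  phi q - exp_next K (@phi R n r) q = K^-1 * Epair q (fun x y => `|gap n x y|).
Proof.
move=> q_stoch; rewrite -(Epair_cst q_stoch (phi q)) -EpairZ.
have -> : exp_next K (@phi R n r) q = Epair q (fun x y => phi (cga_step K q x y)) by [].
by rewrite -EpairB; apply: Epair_ext => x y; rewrite phi_step.
Qed.

End Cga.

Theorem lemma4 (R : realType) (n r : nat) (K s : R) (t : nat) (p : freq R n r) :
  (1 <= n)%N -> (2 <= r)%N -> 0 < K ->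
  (exists m : nat, r%:R^-1 = m%:R * K^-1) ->
  reachable K t p ->
  0 < s -> (forall i : 'I_n, s <= p i (topS r)) ->
  1 / 2 <= phi p ->
  2 * s * Num.sqrt (phi p) / (15 * K) <= phi p - exp_next K (@phi R n r) p.
Proof.
move=> _ r_ge2 K_gt0 rK reach s_gt0 s_le_top phi_ge.
have [p_grid p_stoch] := reachable_grid_stochastic r_ge2 K_gt0 rK reach.
have p_ge0 i j : 0 <= p i j.
  by have [m ->] := p_grid i j; rewrite mulr_ge0 ?invr_ge0 // ltW.
have p_top i : s <= p i (topS r) <= 1.
  by rewrite s_le_top -(p_stoch i) (bigD1 (topS r)) //= lerDl sumr_ge0.
set sg := Num.sqrt (phi p).
have sg_gt0 : 0 < sg by rewrite sqrtr_gt0; lra.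
have sg2 : sg ^+ 2 = phi p by rewrite sqr_sqrtr //; lra.
rewrite phi_sub_exp_next //.
have -> : 2 * s * sg / (15 * K) = K^-1 * (2 * s * sg / 15) by rewrite invfM; ring.
apply: ler_wpM2l; first by rewrite invr_ge0 ltW.
apply: (abs_moment_lower_bound s_gt0 sg_gt0) (Epair_abs_gap_ge p_stoch p_ge0 (ltW sg_gt0)).
  by rewrite sg2.
by rewrite sg2; apply: var_gap_bounds.
Qed.
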